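(* Let $m$ be a positive integer, $\gamma\in C^m(\mathbb{R},\mathbb{R}^3)$, and $K\subseteq\mathbb{R}$ a compact set containing at least $m+1$ points and having finitely many isolated points. If $\gamma$ satisfies the discrete $A/V$ condition on $K$, then $\gamma$ satisfies the $A/V$ condition on $K$. Moreover, if $m=1$, the same conclusion holds for any compact $K\subseteq\mathbb{R}$ containing at least $2$ points.
   Context: $C^m(\mathbb{R},\mathbb{R}^3)$: curves whose components are $m$-times continuously differentiable with bounded $m$th derivative. For $\gamma=(f,g,h)$ and $a\in\mathbb{R}$, $T_af(x)=\sum_{k=0}^m\frac{f^{(k)}(a)}{k!}(x-a)^k$ (similarly $T_ag$); $A(\gamma;a,b)= h(b)-h(a)-2\int_a^b\big((T_af)'T_ag-(T_ag)'T_af\big) + 2f(a)(g(b)-T_ag(b)) - 2g(a)(f(b)-T_af(b))$, $V(\gamma;a,b)=(b-a)^{2m}+(b-a)^m\int_a^b(|(T_af)'|+|(T_ag)'|)$. $\gamma$ satisfies the $A/V$ condition on $E$ if for every $\varepsilon>0$ there is $\delta>0$ with $|A(\gamma;a,b)/V(\gamma;a,b)|<\varepsilon$ for all $a,b\in E$ with $0<b-a<\delta$. For $X$ a set of $m+1$ distinct points, $P(X;\phi)$ is the unique polynomial of degree $\le m$ agreeing with $\phi$ on $X$; $P_f=P(X;f)$, $P_g=P(X;g)$, and for $a,b\in X$: $A[X,\gamma;a,b]=h(b)-h(a)-2\int_a^b(P_f'P_g-P_g'P_f)$, $V[X,\gamma;a,b]=\operatorname{diam}(X)^{2m}+\operatorname{diam}(X)^m\int_a^b(|P_f'|+|P_g'|)$.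 $\gamma$ satisfies the discrete $A/V$ condition on $E$ if for every $\varepsilon>0$ there is $\delta>0$ such that $|A[X,\gamma;a,b]/V[X,\gamma;a,b]|<\varepsilon$ for all $X\subseteq E$ with $\#X=m+1$, $\operatorname{diam}X<\delta$, and $a,b\in X$ with $a<b$. *)

From Stdlib Require Import Reals Lra List.
From Stdlib Require Rtopology.
From Coquelicot Require Import Coquelicot.
Import ListNotations.
Open Scope R_scope.

Definition Cm (m : nat) (f : R -> R) : Prop :=
  (forall k x, (k <= m)%nat -> ex_derive_n f k x) /\
  (forall k x, (k <= m)%nat -> continuous (Derive_n f k) x) /\
  (exists M, forall x, Rabs (Derive_n f m x) <= M).

Definition Taylor (m : nat) (f : R -> R) (a : R) (x : R) : R :=
  sum_f_R0 (fun k => Derive_n f k a / INR (Factorial.fact k) * (x - a) ^ k) m.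

Definition Acont (m : nat) (f g h : R -> R) (a b : R) : R :=
  h b - h a
  - 2 * RInt (fun x => Derive (Taylor m f a) x * Taylor m g a x
                     - Derive (Taylor m g a) x * Taylor m f a x) a b
  + 2 * f a * (g b - Taylor m g a b)
  - 2 * g a * (f b - Taylor m f a b).

Definition Vcont (m : nat) (f g : R -> R) (a b : R) : R :=
  (b - a) ^ (2 * m)
  + (b - a) ^ m * RInt (fun x => Rabs (Derive (Taylor m f a) x)
                               + Rabs (Derive (Taylor m g a) x)) a b.

Definition AV_condition (m : nat) (f g h : R -> R) (E : R -> Prop) : Prop :=
  forall eps, 0 < eps -> exists delta, 0 < delta /\
    forall a b, E a -> E b -> 0 < b - a < delta ->
      Rabs (Acont m f g h a b / Vcont m f g a b) < eps.

(* Finite sets X of reals are represented by duplicate-free lists. *)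

Definition lagrange (xs : list R) (phi : R -> R) (x : R) : R :=
  fold_right Rplus 0
    (map (fun i =>
       phi (nth i xs 0) *
       fold_right Rmult 1
         (map (fun j => (x - nth j xs 0) / (nth i xs 0 - nth j xs 0))
              (filter (fun j => negb (Nat.eqb j i)) (seq 0 (length xs)))))
     (seq 0 (length xs))).

Definition diam (xs : list R) : R :=
  fold_right Rmax 0
    (map (fun x => fold_right Rmax 0 (map (fun y => Rabs (x - y)) xs)) xs).

Definition Adisc (f g h : R -> R) (xs : list R) (a b : R) : R :=
  h b - h a
  - 2 * RInt (fun x => Derive (lagrange xs f) x * lagrange xs g x
                     - Derive (lagrange xs g) x * lagrange xs f x) a b.

Definition Vdisc (m : nat) (f g : R -> R) (xs : list R) (a b : R) : R :=
  diam xs ^ (2 * m)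
  + diam xs ^ m * RInt (fun x => Rabs (Derive (lagrange xs f) x)
                               + Rabs (Derive (lagrange xs g) x)) a b.

Definition discrete_AV_condition (m : nat) (f g h : R -> R) (E : R -> Prop) : Prop :=
  forall eps, 0 < eps -> exists delta, 0 < delta /\
    forall xs : list R, NoDup xs -> length xs = S m -> (forall x, In x xs -> E x) ->
      diam xs < delta ->
      forall a b, In a xs -> In b xs -> a < b ->
        Rabs (Adisc f g h xs a b / Vdisc m f g xs a b) < eps.

Definition isolated_point (K : R -> Prop) (x : R) : Prop :=
  K x /\ exists eps, 0 < eps /\ forall y, K y -> Rabs (y - x) < eps -> y = x.

Definition finitely_many_isolated (K : R -> Prop) : Prop :=
  exists l : list R, forall x, isolated_point K x -> In x l.

Definition at_least_points (n : nat) (K : R -> Prop) : Prop :=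
  exists l : list R, NoDup l /\ length l = n /\ forall x, In x l -> K x.

(* Fix [a < b] in [K] close together and choose [m + 1] nodes [X] in [K] that contain [a]
   and [b] and lie within [b - a] of [a]: for [m = 1] take [X = {a, b}]; otherwise [a] is
   not isolated and the other nodes can be taken near [a].  Let [eta] bound how far
   [f^(m)] and [g^(m)] move on [[a - 2(b - a), a + 2(b - a)]]; by uniform continuity it is
   small uniformly in [a].  Applying Rolle's theorem to [phi - P(X; phi)] and Taylor's
   formula to [phi - T_a phi] shows that [E = P(X; phi) - T_a phi] and [E'] are
   [O(eta (b - a)^m)] and [O(eta (b - a)^(m - 1))].  Once an exact derivative is split
   off, [A(gamma; a, b) - A[X, gamma; a, b]] is an integral of terms each containing [E]
   or [E'], hence [O(eta V(gamma; a, b))], while [V[X, gamma; a, b] = O(V(gamma; a, b))].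
   So the ratio [A/V] is at most a constant times the discrete one plus [O(eta)]. *)

From Stdlib Require Import Reals List Lra Lia Classical IndefiniteDescription.
From Stdlib Require Rtopology.
From Coquelicot Require Import Coquelicot.
Import ListNotations.
Open Scope R_scope.

(** * Smooth functions and polynomials *)

Definition derivable_upto (n : nat) (p : R -> R) : Prop :=
  forall k x, (k <= n)%nat -> ex_derive_n p k x.

Definition smooth (p : R -> R) : Prop := forall k x, ex_derive_n p k x.

Definition poly_deg_le (n : nat) (p : R -> R) : Prop :=
  smooth p /\ forall x, Derive_n p (S n) x = 0.

Lemma smooth_derivable_upto n p : smooth p -> derivable_upto n p.
Proof. intros Hp k x _. apply Hp. Qed.

Lemma derivable_upto_minus n p q :
  derivable_upto n p -> derivable_upto n q -> derivable_upto n (fun x => p x - q x).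
Proof.
  intros Hp Hq k x Hk.
  apply ex_derive_n_minus; apply filter_forall; intros y j Hj; [apply Hp | apply Hq]; lia.
Qed.

Lemma Derive_n_minus_upto n p q k x :
  derivable_upto n p -> derivable_upto n q -> (k <= n)%nat ->
  Derive_n (fun x => p x - q x) k x = Derive_n p k x - Derive_n q k x.
Proof.
  intros Hp Hq Hk.
  apply Derive_n_minus; apply filter_forall; intros y j Hj; [apply Hp | apply Hq]; lia.
Qed.

Lemma Derive_n_plus_upto n p q x :
  derivable_upto n p -> derivable_upto n q ->
  Derive_n (fun x => p x + q x) n x = Derive_n p n x + Derive_n q n x.
Proof. intros Hp Hq. apply Derive_n_plus; apply filter_forall; auto. Qed.

Lemma derivable_upto_is_derive n p j x :
  derivable_upto n p -> (j < n)%nat -> is_derive (Derive_n p j) x (Derive_n p (S j) x).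
Proof. intros Hp Hj. apply Derive_correct. exact (Hp (S j) x Hj). Qed.

Lemma derivable_upto_continuity_pt n p j x :
  derivable_upto n p -> (j < n)%nat -> continuity_pt (Derive_n p j) x.
Proof.
  intros Hp Hj. apply continuity_pt_filterlim.
  apply (ex_derive_continuous (Derive_n p j)). exact (Hp (S j) x Hj).
Qed.

Lemma smooth_continuous p j x : smooth p -> continuous (Derive_n p j) x.
Proof. intros Hp. apply (ex_derive_continuous (Derive_n p j)). exact (Hp (S j) x). Qed.

Lemma smooth_ex_derive p x : smooth p -> ex_derive p x.
Proof. intros Hp. exact (Hp 1%nat x). Qed.

Lemma smooth_const c : smooth (fun _ => c).
Proof. intros k x. apply ex_derive_n_const. Qed.

Lemma smooth_plus p q : smooth p -> smooth q -> smooth (fun x => p x + q x).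
Proof. intros Hp Hq k x. apply ex_derive_n_plus; apply filter_forall; auto. Qed.

Lemma smooth_minus p q : smooth p -> smooth q -> smooth (fun x => p x - q x).
Proof. intros Hp Hq k x. apply ex_derive_n_minus; apply filter_forall; auto. Qed.

Lemma smooth_scal c p : smooth p -> smooth (fun x => c * p x).
Proof. intros Hp k x. apply ex_derive_n_scal_l, Hp. Qed.

Lemma smooth_ext p q : (forall x, p x = q x) -> smooth p -> smooth q.
Proof. intros He Hp k x. eapply ex_derive_n_ext; eauto. Qed.

Lemma Derive_n_linear_mul a b p k x : smooth p ->
  ex_derive_n (fun y => (a * y + b) * p y) k x /\
  Derive_n (fun y => (a * y + b) * p y) k x =
    (a * x + b) * Derive_n p k x + INR k * a * Derive_n p (pred k) x.
Proof.
  intros Hp. revert x. induction k as [|k IH]; intros x.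
  - split; [exact I | simpl; ring].
  - assert (Heq : forall y, Derive_n (fun y => (a * y + b) * p y) k y =
        (a * y + b) * Derive_n p k y + INR k * a * Derive_n p (pred k) y)
      by (intros y; apply IH).
    assert (Hk : ex_derive (Derive_n p k) x) by exact (Hp (S k) x).
    assert (Hk' : ex_derive (Derive_n p (pred k)) x) by exact (Hp (S (pred k)) x).
    split; simpl.
    + eapply ex_derive_ext; [intros t; symmetry; apply Heq|]. auto_derive; auto.
    + rewrite (Derive_ext _ _ _ Heq). apply is_derive_unique. auto_derive; [auto|].
      destruct k as [|k]; [simpl; ring|].
      change (Derive (Derive_n p (S k)) x) with (Derive_n p (S (S k)) x).
      change (Derive (fun y => Derive_n p (S k) y) x) with (Derive_n p (S (S k)) x).
      change (Derive (fun y => Derive_n p (pred (S k)) y) x) with (Derive_n p (S k) x).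
      simpl pred. ring.
Qed.

Lemma poly_deg_le_const n c : poly_deg_le n (fun _ => c).
Proof. split; [apply smooth_const | intros x; apply Derive_n_const]. Qed.

Lemma poly_deg_le_plus n p q :
  poly_deg_le n p -> poly_deg_le n q -> poly_deg_le n (fun x => p x + q x).
Proof.
  intros [Hp Hp0] [Hq Hq0]. split; [apply smooth_plus; auto|]. intros x.
  rewrite Derive_n_plus_upto by (apply smooth_derivable_upto; auto).
  rewrite Hp0, Hq0. ring.
Qed.

Lemma poly_deg_le_minus n p q :
  poly_deg_le n p -> poly_deg_le n q -> poly_deg_le n (fun x => p x - q x).
Proof.
  intros [Hp Hp0] [Hq Hq0]. split; [apply smooth_minus; auto|]. intros x.
  rewrite (Derive_n_minus_upto (S n)) by (auto using smooth_derivable_upto).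
  rewrite Hp0, Hq0. ring.
Qed.

Lemma poly_deg_le_scal n c p : poly_deg_le n p -> poly_deg_le n (fun x => c * p x).
Proof.
  intros [Hp Hp0]. split; [apply smooth_scal; auto|].
  intros x. rewrite Derive_n_scal_l, Hp0. ring.
Qed.

Lemma poly_deg_le_ext n p q : (forall x, p x = q x) -> poly_deg_le n p -> poly_deg_le n q.
Proof.
  intros He [Hp Hp0]. split; [eapply smooth_ext; eauto|].
  intros x. rewrite <- (Derive_n_ext _ _ _ _ He). auto.
Qed.

Lemma poly_deg_le_S n p : poly_deg_le n p -> poly_deg_le (S n) p.
Proof.
  intros [Hp Hp0]. split; auto. intros x. simpl.
  rewrite (Derive_ext _ (fun _ => 0) _ Hp0). apply Derive_const.
Qed.

Lemma poly_deg_le_mono n n' p : (n <= n')%nat -> poly_deg_le n p -> poly_deg_le n' p.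
Proof. induction 1; auto using poly_deg_le_S. Qed.

Lemma poly_deg_le_linear_mul n a b p :
  poly_deg_le n p -> poly_deg_le (S n) (fun y => (a * y + b) * p y).
Proof.
  intros Hpn. destruct (poly_deg_le_S _ _ Hpn) as [Hp Hp1]. split.
  - intros k x. apply Derive_n_linear_mul, Hp.
  - intros x. rewrite (proj2 (Derive_n_linear_mul a b p (S (S n)) x Hp)).
    simpl pred. rewrite Hp1, (proj2 Hpn). ring.
Qed.

Lemma poly_deg_le_Derive_n_const n p x y :
  poly_deg_le n p -> Derive_n p n x = Derive_n p n y.
Proof.
  intros [Hp Hp0].
  destruct (MVT_gen (Derive_n p n) y x (Derive_n p (S n))) as [c [_ Hc]].
  - intros z _. apply (derivable_upto_is_derive (S n)); [apply smooth_derivable_upto|]; auto.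
  - intros z _. apply (derivable_upto_continuity_pt (S n)); [apply smooth_derivable_upto|]; auto.
  - rewrite Hp0 in Hc. lra.
Qed.

Lemma poly_deg_le_pow_shift c j : poly_deg_le j (fun x => (x - c) ^ j).
Proof.
  induction j as [|j IH].
  - apply (poly_deg_le_ext 0 (fun _ => 1)); [intros; simpl; ring | apply poly_deg_le_const].
  - eapply poly_deg_le_ext; [|apply (poly_deg_le_linear_mul j 1 (- c)), IH].
    intros; simpl; ring.
Qed.

Lemma poly_deg_le_sum_f_R0 n (F : nat -> R -> R) N :
  (forall j, (j <= N)%nat -> poly_deg_le n (F j)) ->
  poly_deg_le n (fun x => sum_f_R0 (fun j => F j x) N).
Proof.
  induction N as [|N IH]; intros H; simpl.
  - apply (poly_deg_le_ext n (F 0%nat)); [reflexivity | apply H; lia].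
  - apply poly_deg_le_plus; [apply IH; intros; apply H|apply H]; lia.
Qed.

Lemma poly_deg_le_fold_sum n (l : list nat) (G : nat -> R -> R) :
  (forall i, In i l -> poly_deg_le n (G i)) ->
  poly_deg_le n (fun x => fold_right Rplus 0 (map (fun i => G i x) l)).
Proof.
  induction l as [|i l IH]; intros H; simpl.
  - apply poly_deg_le_const.
  - apply poly_deg_le_plus; [apply H | apply IH; intros; apply H]; simpl; auto.
Qed.

Lemma poly_deg_le_fold_prod (l : list nat) (c d : nat -> R) :
  poly_deg_le (length l) (fun x => fold_right Rmult 1 (map (fun j => (x - c j) / d j) l)).
Proof.
  induction l as [|j l IH]; simpl.
  - apply poly_deg_le_const.
  - eapply poly_deg_le_ext; [|apply (poly_deg_le_linear_mul _ (/ d j) (- c j / d j)), IH].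
    intros x. unfold Rdiv. ring.
Qed.

(** * Taylor and Lagrange polynomials *)

Lemma poly_deg_le_Taylor m f a : poly_deg_le m (Taylor m f a).
Proof.
  apply poly_deg_le_sum_f_R0. intros j Hj.
  apply poly_deg_le_scal, (poly_deg_le_mono j); auto using poly_deg_le_pow_shift.
Qed.

Lemma smooth_Taylor m f a : smooth (Taylor m f a).
Proof. apply poly_deg_le_Taylor. Qed.

Lemma Derive_n_sum_f_R0 (F : nat -> R -> R) N k x :
  (forall j, smooth (F j)) ->
  Derive_n (fun x => sum_f_R0 (fun j => F j x) N) k x =
  sum_f_R0 (fun j => Derive_n (F j) k x) N.
Proof.
  intros HF. induction N as [|N IH]; [reflexivity|]. simpl.
  assert (Hsum : smooth (fun x => sum_f_R0 (fun j => F j x) N)).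
  { clear IH. induction N as [|N IH]; [apply HF | apply smooth_plus; auto]. }
  rewrite Derive_n_plus_upto, IH by (apply smooth_derivable_upto; auto). reflexivity.
Qed.

Lemma sum_f_R0_single (F : nat -> R) N k : (k <= N)%nat ->
  (forall j, (j <= N)%nat -> j <> k -> F j = 0) -> sum_f_R0 F N = F k.
Proof.
  induction N as [|N IH]; intros Hk H; simpl.
  - replace k with 0%nat by lia. reflexivity.
  - destruct (Nat.eq_dec k (S N)) as [->|Hne].
    + rewrite sum_eq_R0; [ring|]. intros; apply H; lia.
    + rewrite IH, (H (S N)) by (lia || (intros; apply H; lia)). ring.
Qed.

Lemma Derive_n_pow_shift c j k :
  Derive_n (fun x => (x - c) ^ j) k c =
  if Nat.eq_dec j k then INR (Factorial.fact k) else 0.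
Proof.
  transitivity (Derive_n (fun z => z ^ j) k (c + - c)).
  { rewrite <- Derive_n_comp_trans. reflexivity. }
  rewrite Derive_n_pow, Rplus_opp_r.
  destruct (Nat.eq_dec j k) as [->|Hjk].
  - destruct (Compare_dec.le_dec k k); [|lia].
    rewrite Nat.sub_diag. simpl. field.
  - destruct (Compare_dec.le_dec k j); [|reflexivity].
    rewrite pow_i by lia. ring.
Qed.

Lemma Derive_n_Taylor m f a k : (k <= m)%nat ->
  Derive_n (Taylor m f a) k a = Derive_n f k a.
Proof.
  intros Hk. unfold Taylor.
  rewrite Derive_n_sum_f_R0
    by (intros j; apply smooth_scal, (poly_deg_le_pow_shift a j)).
  rewrite (sum_f_R0_single _ m k Hk).
  - rewrite Derive_n_scal_l, Derive_n_pow_shift.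
    destruct (Nat.eq_dec k k); [|lia].
    field. apply not_0_INR, Factorial.fact_neq_0.
  - intros j _ Hjk. rewrite Derive_n_scal_l, Derive_n_pow_shift.
    destruct (Nat.eq_dec j k); [lia | ring].
Qed.

Lemma Taylor_at m f a : Taylor m f a a = f a.
Proof. apply (Derive_n_Taylor m f a 0). lia. Qed.

Lemma length_filter_neq (l : list nat) i : NoDup l -> In i l ->
  length (filter (fun j => negb (Nat.eqb j i)) l) = pred (length l).
Proof.
  induction l as [|j l IH]; intros Hn Hi; [destruct Hi|].
  inversion Hn as [|? ? Hj Hl]; subst. simpl. destruct (Nat.eqb_spec j i) as [->|Hne].
  - simpl. rewrite forallb_filter_id; [reflexivity|].
    apply forallb_forall. intros j Hj'. apply Bool.negb_true_iff, Nat.eqb_neq.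
    intros ->. contradiction.
  - destruct Hi as [|Hi]; [congruence|]. simpl. rewrite IH; auto.
    destruct l; [destruct Hi | reflexivity].
Qed.

Lemma poly_deg_le_lagrange m xs phi : length xs = S m -> poly_deg_le m (lagrange xs phi).
Proof.
  intros Hl. apply poly_deg_le_fold_sum. intros i Hi. apply poly_deg_le_scal.
  set (l := filter (fun j => negb (Nat.eqb j i)) (seq 0 (length xs))).
  replace m with (length l)
    by (unfold l; rewrite length_filter_neq, length_seq; [lia | apply seq_NoDup | auto]).
  apply (poly_deg_le_fold_prod _ (fun j => nth j xs 0) (fun j => nth i xs 0 - nth j xs 0)).
Qed.

Lemma smooth_lagrange xs phi : smooth (lagrange xs phi).
Proof.
  destruct xs as [|x xs].
  - apply (smooth_ext (fun _ => 0)); [reflexivity | apply smooth_const].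
  - apply (poly_deg_le_lagrange (length xs)). reflexivity.
Qed.

Lemma fold_sum_single (l : list nat) (T : nat -> R) k :
  NoDup l -> In k l -> (forall i, In i l -> i <> k -> T i = 0) ->
  fold_right Rplus 0 (map T l) = T k.
Proof.
  induction l as [|j l IH]; intros Hn Hk H; [destruct Hk|].
  inversion Hn as [|? ? Hj Hl]; subst. simpl. destruct Hk as [->|Hk].
  - enough (fold_right Rplus 0 (map T l) = 0) by lra.
    assert (Hz : forall i, In i l -> T i = 0)
      by (intros i Hi; apply H; [right; auto | intros ->; contradiction]).
    clear - Hz. induction l as [|j l IH]; [reflexivity|]. simpl.
    rewrite Hz, IH; [ring | intros; apply Hz |]; simpl; auto.
  - rewrite IH, H; auto; [ring | simpl; auto | intros ->; contradiction |].
    intros; apply H; simpl; auto.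
Qed.

Lemma fold_prod_zero (l : list nat) (G : nat -> R) j :
  In j l -> G j = 0 -> fold_right Rmult 1 (map G l) = 0.
Proof.
  induction l as [|j' l IH]; intros Hj HG; [destruct Hj|]. simpl.
  destruct Hj as [->|Hj]; [rewrite HG | rewrite IH]; auto; ring.
Qed.

Lemma fold_prod_one (l : list nat) (G : nat -> R) :
  (forall j, In j l -> G j = 1) -> fold_right Rmult 1 (map G l) = 1.
Proof.
  induction l as [|j l IH]; intros H; [reflexivity|]. simpl.
  rewrite H, IH; [ring | intros; apply H |]; simpl; auto.
Qed.

Lemma lagrange_interp xs phi x : NoDup xs -> In x xs -> lagrange xs phi x = phi x.
Proof.
  intros Hn Hx. destruct (In_nth xs x 0 Hx) as [k [Hk <-]]. unfold lagrange.
  rewrite (fold_sum_single _ _ k); [| apply seq_NoDup | apply in_seq; lia |].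
  - rewrite fold_prod_one; [ring|]. intros j Hj.
    apply filter_In in Hj as [Hj Hjk]. apply in_seq in Hj.
    apply Bool.negb_true_iff, Nat.eqb_neq in Hjk.
    field. intros He. apply Hjk, (NoDup_nth xs 0); auto; lia || lra.
  - intros i Hi Hik. rewrite (fold_prod_zero _ _ k); [ring | |].
    + apply filter_In. split; [apply in_seq; lia|].
      apply Bool.negb_true_iff, Nat.eqb_neq. auto.
    + unfold Rdiv. ring.
Qed.

(** * Interpolation error *)

Lemma list_min_exists (l : list R) :
  l <> nil -> exists mu, In mu l /\ forall y, In y l -> mu <= y.
Proof.
  induction l as [|x l IH]; intros H; [congruence|].
  destruct l as [|x' l'].
  - exists x. split; [left; auto|]. intros y [<-|[]]. lra.
  - destruct IH as [mu [Hmu Hle]]; [congruence|].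
    destruct (Rle_dec x mu).
    + exists x. split; [left; auto|]. intros y [<-|Hy]; [lra|]. specialize (Hle y Hy). lra.
    + exists mu. split; [right; auto|]. intros y [<-|Hy]; [lra | auto].
Qed.

Lemma increasing_enumeration n (l : list R) : NoDup l -> length l = S n ->
  exists z : nat -> R,
    (forall i, (i <= n)%nat -> In (z i) l) /\ (forall i, (i < n)%nat -> z i < z (S i)).
Proof.
  revert l. induction n as [|n IH]; intros l Hn Hl.
  - destruct l as [|x l]; [discriminate|]. exists (fun _ => x).
    split; [intros; left; auto | intros; lia].
  - destruct (list_min_exists l) as [mu [Hmu Hle]]; [intros ->; discriminate|].
    destruct (in_split mu l Hmu) as [l1 [l2 ->]].
    assert (Hin : forall y, In y (l1 ++ l2) -> In y (l1 ++ mu :: l2)).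
    { intros y Hy. apply in_app_or in Hy. apply in_or_app. simpl. tauto. }
    destruct (IH (l1 ++ l2)) as [z [Hz1 Hz2]].
    { eapply NoDup_remove_1; eauto. }
    { rewrite length_app in *. simpl in Hl. lia. }
    exists (fun i => match i with O => mu | S i' => z i' end). split.
    + intros [|i] Hi; [auto | apply Hin, Hz1; lia].
    + intros [|i] Hi; [|apply Hz2; lia].
      assert (Hz0 := Hz1 0%nat ltac:(lia)).
      assert (mu <> z 0%nat) by (intros ->; eapply NoDup_remove_2; eauto).
      specialize (Hle _ (Hin _ Hz0)). lra.
Qed.

Lemma Rolle_iterated k (F : nat -> R -> R) (z : nat -> R) :
  (forall j x, (j < k)%nat -> is_derive (F j) x (F (S j) x)) ->
  (forall i, (i <= k)%nat -> F 0%nat (z i) = 0) ->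
  (forall i, (i < k)%nat -> z i < z (S i)) ->
  exists xi, z 0%nat <= xi <= z k /\ F k xi = 0.
Proof.
  revert F z. induction k as [|k IH]; intros F z HD H0 Hinc.
  - exists (z 0%nat). split; [lra | apply H0; lia].
  - assert (HR : forall i, exists w, (i < S k)%nat -> z i < w < z (S i) /\ F 1%nat w = 0).
    { intros i. destruct (Compare_dec.lt_dec i (S k)) as [Hi|Hi]; [|exists 0; lia].
      destruct (MVT_cor2 (F 0%nat) (F 1%nat) (z i) (z (S i))) as [c [Hc1 Hc2]].
      - apply Hinc; auto.
      - intros c _. apply is_derive_Reals, HD. lia.
      - exists c. intros _. split; auto.
        rewrite (H0 i), (H0 (S i)) in Hc1 by lia.
        specialize (Hinc i Hi).
        destruct (Rmult_integral (F 1%nat c) (z (S i) - z i)); [lra | auto | lra]. }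
    destruct (functional_choice _ HR) as [w Hw].
    destruct (IH (fun j => F (S j)) w) as [xi [Hxi1 Hxi2]].
    + intros j x Hj. apply HD. lia.
    + intros i Hi. apply Hw. lia.
    + intros i Hi. destruct (Hw i ltac:(lia)), (Hw (S i) ltac:(lia)). lra.
    + exists xi. split; auto. destruct (Hw 0%nat ltac:(lia)), (Hw k ltac:(lia)). lra.
Qed.

Lemma interp_error_Derive_n_root m f xs lo hi : derivable_upto m f ->
  NoDup xs -> length xs = S m -> (forall x, In x xs -> lo <= x <= hi) ->
  forall k, (k <= m)%nat -> exists xi, lo <= xi <= hi /\
    Derive_n (fun x => f x - lagrange xs f x) k xi = 0.
Proof.
  intros Hf Hn Hl Hlh k Hk.
  assert (Hphi : derivable_upto m (fun x => f x - lagrange xs f x))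
    by (apply derivable_upto_minus, smooth_derivable_upto, smooth_lagrange; auto).
  destruct (increasing_enumeration m xs Hn Hl) as [z [Hz1 Hz2]].
  destruct (Rolle_iterated k (Derive_n (fun x => f x - lagrange xs f x)) z)
    as [xi [Hxi1 Hxi2]].
  - intros j x Hj. apply (derivable_upto_is_derive m); auto. lia.
  - intros i Hi. simpl. rewrite lagrange_interp by (auto; apply Hz1; lia). ring.
  - intros i Hi. apply Hz2. lia.
  - exists xi. split; auto.
    assert (H0 := Hlh _ (Hz1 0%nat ltac:(lia))). assert (H1 := Hlh _ (Hz1 k Hk)). lra.
Qed.

Lemma MVT_Derive_n n p j lo hi u v : derivable_upto n p -> (j < n)%nat ->
  lo <= u <= hi -> lo <= v <= hi ->
  exists c, lo <= c <= hi /\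
    Derive_n p j v - Derive_n p j u = Derive_n p (S j) c * (v - u).
Proof.
  intros Hp Hj Hu Hv.
  destruct (MVT_gen (Derive_n p j) u v (Derive_n p (S j))) as [c [Hc Hmvt]].
  - intros; apply (derivable_upto_is_derive n); auto.
  - intros; apply (derivable_upto_continuity_pt n); auto.
  - exists c. split; auto. unfold Rmin, Rmax in Hc. destruct (Rle_dec u v); lra.
Qed.

Definition deviation_le (F : R -> R) (a r eta : R) : Prop :=
  forall y, a - r <= y <= a + r -> Rabs (F y - F a) <= eta.

Lemma deviation_le_nonneg F a r eta : 0 <= r -> deviation_le F a r eta -> 0 <= eta.
Proof.
  intros Hr Hdev. specialize (Hdev a). rewrite Rminus_diag, Rabs_R0 in Hdev. apply Hdev. lra.
Qed.

Lemma Taylor_remainder_Derive_n_bound m f a D eta :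
  derivable_upto m f -> deviation_le (Derive_n f m) a D eta ->
  forall j, (j <= m)%nat -> forall y, a - D <= y <= a + D ->
  Rabs (Derive_n (fun x => f x - Taylor m f a x) (m - j) y) <= eta * D ^ j.
Proof.
  intros Hf Hdev j. set (r := fun x => f x - Taylor m f a x).
  assert (HT := poly_deg_le_Taylor m f a).
  assert (HTd : derivable_upto m (Taylor m f a)) by apply smooth_derivable_upto, smooth_Taylor.
  assert (Hr : derivable_upto m r) by (apply derivable_upto_minus; auto).
  induction j as [|j IH]; intros Hj y Hy.
  - unfold r. rewrite Nat.sub_0_r, (Derive_n_minus_upto m) by auto.
    rewrite (poly_deg_le_Derive_n_const _ _ y a HT).
    rewrite Derive_n_Taylor, pow_O, Rmult_1_r by lia. auto.
  - set (k := (m - S j)%nat).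
    assert (Hra : Derive_n r k a = 0).
    { unfold r. rewrite (Derive_n_minus_upto m), Derive_n_Taylor by (unfold k; auto; lia).
      ring. }
    destruct (MVT_Derive_n m r k (a - D) (a + D) a y) as [c [Hc Hmvt]];
      [auto | unfold k; lia | lra | auto |].
    rewrite Hra, Rminus_0_r in Hmvt. rewrite Hmvt, Rabs_mult, <- tech_pow_Rmult.
    replace (S k) with (m - j)%nat in Hmvt |- * by (unfold k; lia).
    replace (eta * (D * D ^ j)) with (eta * D ^ j * D) by ring.
    apply Rmult_le_compat; [apply Rabs_pos | apply Rabs_pos | apply IH; auto; lia |].
    apply Rabs_le. lra.
Qed.

Section InterpolationError.

Variables (m : nat) (f : R -> R) (xs : list R) (a s eta : R).
Hypothesis Hf : derivable_upto m f.
Hypotheses (Hnodup : NoDup xs) (Hlen : length xs = S m).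
Hypothesis Hnodes : forall x, In x xs -> a - s <= x <= a + s.
Hypothesis Hdev : deviation_le (Derive_n f m) a (2 * s) eta.

Let E x := lagrange xs f x - Taylor m f a x.

Lemma poly_deg_le_interp_Taylor : poly_deg_le m E.
Proof. apply poly_deg_le_minus; [apply poly_deg_le_lagrange | apply poly_deg_le_Taylor]; auto. Qed.

(* At a zero of [(f - P(X; f))^(m - j)], [E^(m - j)] coincides with [(f - T_a f)^(m - j)]. *)
Lemma exists_interp_Taylor_Derive_n_small j : (j <= m)%nat ->
  exists xi, a - s <= xi <= a + s /\ Rabs (Derive_n E (m - j) xi) <= eta * (2 * s) ^ j.
Proof.
  intros Hj.
  destruct (interp_error_Derive_n_root m f xs (a - s) (a + s) Hf Hnodup Hlen Hnodes (m - j))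
    as [xi [Hxi Hroot]]; [lia|].
  exists xi. split; auto.
  assert (Hr := Taylor_remainder_Derive_n_bound m f a (2 * s) eta Hf Hdev j Hj xi
                  ltac:(lra)).
  assert (HP : derivable_upto m (lagrange xs f)) by apply smooth_derivable_upto, smooth_lagrange.
  assert (HT : derivable_upto m (Taylor m f a)) by apply smooth_derivable_upto, smooth_Taylor.
  unfold E. rewrite (Derive_n_minus_upto m) in Hroot, Hr |- * by (auto; lia).
  replace (Derive_n (lagrange xs f) (m - j) xi - Derive_n (Taylor m f a) (m - j) xi)
    with (Derive_n f (m - j) xi - Derive_n (Taylor m f a) (m - j) xi) by lra.
  exact Hr.
Qed.

Lemma interp_Taylor_Derive_n_bound j : (j <= m)%nat ->
  forall x, a - s <= x <= a + s ->
  Rabs (Derive_n E (m - j) x) <= (INR j + 1) * eta * (2 * s) ^ j.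
Proof.
  assert (HE := poly_deg_le_interp_Taylor).
  induction j as [|j IH]; intros Hj x Hx;
    destruct (exists_interp_Taylor_Derive_n_small _ Hj) as [xi [Hxi Hsmall]].
  - rewrite Nat.sub_0_r in *.
    rewrite (poly_deg_le_Derive_n_const _ _ x xi HE).
    simpl in *. lra.
  - set (k := (m - S j)%nat) in Hsmall |- *.
    destruct (MVT_Derive_n (S m) E k (a - s) (a + s) xi x) as [c [Hc Hmvt]];
      [apply smooth_derivable_upto, HE | unfold k; lia | auto | auto |].
    replace (S k) with (m - j)%nat in Hmvt by (unfold k; lia).
    replace (Derive_n E k x) with (Derive_n E k xi + Derive_n E (m - j) c * (x - xi)) by lra.
    eapply Rle_trans; [apply Rabs_triang|]. rewrite Rabs_mult.
    assert (Hstep : Rabs (Derive_n E (m - j) c) * Rabs (x - xi)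
                    <= (INR j + 1) * eta * (2 * s) ^ j * (2 * s)).
    { apply Rmult_le_compat; [apply Rabs_pos | apply Rabs_pos | apply IH; auto; lia |].
      apply Rabs_le. lra. }
    rewrite S_INR. simpl pow in Hsmall |- *. lra.
Qed.

Lemma interp_Taylor_bounds : (1 <= m)%nat -> forall x, a <= x <= a + s ->
  Rabs (lagrange xs f x - Taylor m f a x) <= (INR m + 1) * eta * (2 * s) ^ m /\
  s * Rabs (Derive (fun y => lagrange xs f y - Taylor m f a y) x)
  <= (INR m + 1) * eta * (2 * s) ^ m.
Proof.
  intros Hm x Hx.
  assert (Heta : 0 <= eta)
    by (apply (deviation_le_nonneg (Derive_n f m) a (2 * s)); [lra | exact Hdev]).
  split.
  - assert (H := interp_Taylor_Derive_n_bound m (le_n m) x ltac:(lra)).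
    rewrite Nat.sub_diag in H. exact H.
  - assert (H := interp_Taylor_Derive_n_bound (m - 1) ltac:(lia) x ltac:(lra)).
    replace (m - (m - 1))%nat with 1%nat in H by lia.
    rewrite minus_INR in H by lia. simpl INR in H.
    replace (INR m - 1 + 1) with (INR m) in H by ring.
    assert (Hpow : (2 * s) ^ m = 2 * s * (2 * s) ^ (m - 1))
      by (rewrite tech_pow_Rmult; f_equal; lia).
    rewrite Hpow.
    assert (0 <= s * (eta * (2 * s) ^ (m - 1)))
      by (apply Rmult_le_pos; [|apply Rmult_le_pos; [|apply pow_le]]; lra).
    apply Rle_trans with (s * (INR m * eta * (2 * s) ^ (m - 1))).
    + apply Rmult_le_compat_l; [lra | exact H].
    + assert (0 <= INR m) by apply pos_INR. nra.
Qed.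

End InterpolationError.

(** * Integral estimates *)

#[local] Hint Resolve smooth_Taylor smooth_lagrange smooth_const smooth_plus smooth_minus
  smooth_scal : core.

Lemma continuous_Rplus_fun (p q : R -> R) x :
  continuous p x -> continuous q x -> continuous (fun y => p y + q y) x.
Proof. apply (continuous_plus p q). Qed.

Lemma continuous_Rminus_fun (p q : R -> R) x :
  continuous p x -> continuous q x -> continuous (fun y => p y - q y) x.
Proof. apply (continuous_minus p q). Qed.

Lemma continuous_Rmult_fun (p q : R -> R) x :
  continuous p x -> continuous q x -> continuous (fun y => p y * q y) x.
Proof. apply (continuous_mult p q). Qed.

Ltac solve_continuous :=
  repeat match goal with
  | |- continuous (fun _ => ?c) _ => apply continuous_const
  | |- continuous (fun y => _ + _) _ => apply continuous_Rplus_fun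
  | |- continuous (fun y => _ - _) _ => apply continuous_Rminus_fun
  | |- continuous (fun y => _ * _) _ => apply continuous_Rmult_fun
  | |- continuous (fun y => Rabs _) _ => apply continuous_Rabs_comp
  | |- continuous (fun y => Derive ?p y) _ => apply (smooth_continuous p 1); auto
  | |- continuous (Derive ?p) _ => apply (smooth_continuous p 1); auto
  | |- continuous ?p _ => apply (smooth_continuous p 0); auto
  end.

Lemma ex_RInt_continuous_R (p : R -> R) a b : (forall x, continuous p x) -> ex_RInt p a b.
Proof. intros H. apply (ex_RInt_continuous (V := R_CompleteNormedModule)). auto. Qed.

Lemma RInt_const_plus_scal c e (k : R -> R) a b : ex_RInt k a b ->
  RInt (fun x => c + e * k x) a b = (b - a) * c + e * RInt k a b.
Proof.
  intros Hk.
  rewrite (RInt_plus (V := R_CompleteNormedModule) (fun _ => c) (fun x => e * k x)).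
  - rewrite RInt_const, (RInt_scal (V := R_CompleteNormedModule) k) by auto. reflexivity.
  - apply ex_RInt_const.
  - apply (ex_RInt_scal (V := R_CompleteNormedModule)). auto.
Qed.

Lemma Rabs_sub_le_RInt_abs_Derive T a b x : smooth T -> a <= x <= b ->
  Rabs (T x - T a) <= RInt (fun y => Rabs (Derive T y)) a b.
Proof.
  intros HT Hx.
  assert (Hint : forall u v, ex_RInt (fun y => Rabs (Derive T y)) u v)
    by (intros; apply ex_RInt_continuous_R; intros; solve_continuous).
  rewrite <- RInt_Derive
    by (intros; first [apply smooth_ex_derive, HT | solve_continuous]).
  eapply Rle_trans;
    [apply abs_RInt_le; [lra | apply ex_RInt_continuous_R; intros; solve_continuous]|].
  rewrite <- (RInt_Chasles (V := R_CompleteNormedModule) (fun y => Rabs (Derive T y)) a x b)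
    by auto.
  assert (0 <= RInt (fun y => Rabs (Derive T y)) x b)
    by (apply RInt_ge_0; [lra | auto | intros; apply Rabs_pos]).
  unfold plus; simpl. lra.
Qed.

Lemma ex_RInt_abs_Derive_plus p q a b : smooth p -> smooth q ->
  ex_RInt (fun x => Rabs (Derive p x) + Rabs (Derive q x)) a b.
Proof. intros Hp Hq. apply ex_RInt_continuous_R. intros. solve_continuous. Qed.

Lemma RInt_abs_Derive_plus_ge_0 p q a b : a <= b -> smooth p -> smooth q ->
  0 <= RInt (fun x => Rabs (Derive p x) + Rabs (Derive q x)) a b.
Proof.
  intros Hab Hp Hq. apply RInt_ge_0; [auto | apply ex_RInt_abs_Derive_plus; auto |].
  intros. apply Rplus_le_le_0_compat; apply Rabs_pos.
Qed.

Lemma Rabs_sub_le_RInt_abs_Derive_plus p q a b x : smooth p -> smooth q -> a <= x <= b ->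
  Rabs (p x - p a) <= RInt (fun y => Rabs (Derive p y) + Rabs (Derive q y)) a b /\
  Rabs (q x - q a) <= RInt (fun y => Rabs (Derive p y) + Rabs (Derive q y)) a b.
Proof.
  intros Hp Hq Hx.
  assert (Hex : forall T, smooth T -> ex_RInt (fun y => Rabs (Derive T y)) a b)
    by (intros; apply ex_RInt_continuous_R; intros; solve_continuous).
  split; (eapply Rle_trans; [apply Rabs_sub_le_RInt_abs_Derive; eauto|]);
    apply RInt_le; auto using ex_RInt_abs_Derive_plus; try lra;
    intros y _; generalize (Rabs_pos (Derive p y)) (Rabs_pos (Derive q y)); lra.
Qed.

Lemma pow_double_bound m s I : 0 < s -> 0 <= I ->
  (2 * s) ^ m * (2 * s) ^ m + (2 * s) ^ m * I <= 4 ^ m * (s ^ (2 * m) + s ^ m * I).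
Proof.
  intros Hs HI.
  assert (Hsm : 0 < s ^ m) by (apply pow_lt; lra).
  assert (H2 : 1 <= 2 ^ m) by (apply pow_R1_Rle; lra).
  replace (2 * m)%nat with (m + m)%nat by lia.
  rewrite pow_add, Rpow_mult_distr.
  replace (4 ^ m) with (2 ^ m * 2 ^ m) by (rewrite <- Rpow_mult_distr; f_equal; lra).
  assert (0 <= s ^ m * I) by (apply Rmult_le_pos; lra).
  assert (s ^ m * I <= 2 ^ m * (s ^ m * I))
    by (rewrite <- (Rmult_1_l (s ^ m * I)) at 1; apply Rmult_le_compat_r; lra).
  assert (2 ^ m * (s ^ m * I) <= 2 ^ m * 2 ^ m * (s ^ m * I))
    by (rewrite Rmult_assoc; apply Rmult_le_compat_l; lra).
  nra.
Qed.

(** * Continuous versus discrete quantities *)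

(* The integrand of [int (P_f' P_g - P_g' P_f) - int (T_f' T_g - T_g' T_f)], once the
   exact derivative [(c_g E_f - c_f E_g)'] of the errors [E = P - T] is split off. *)
Definition cross_remainder (Pf Pg Tf Tg : R -> R) (cf cg x : R) : R :=
  let Ef := fun x => Pf x - Tf x in
  let Eg := fun x => Pg x - Tg x in
  Derive Ef x * (Tg x - cg) + Derive Ef x * Eg x + Derive Tf x * Eg x
  - (Derive Eg x * (Tf x - cf) + Derive Eg x * Ef x + Derive Tg x * Ef x).

Lemma RInt_cross_sub (Pf Pg Tf Tg : R -> R) cf cg a b :
  smooth Pf -> smooth Pg -> smooth Tf -> smooth Tg ->
  RInt (fun x => Derive Pf x * Pg x - Derive Pg x * Pf x) a b
  - RInt (fun x => Derive Tf x * Tg x - Derive Tg x * Tf x) a b =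
  (cg * (Pf b - Tf b) - cf * (Pg b - Tg b)) - (cg * (Pf a - Tf a) - cf * (Pg a - Tg a))
  + RInt (cross_remainder Pf Pg Tf Tg cf cg) a b.
Proof.
  intros HPf HPg HTf HTg.
  set (G := fun x => cg * (Pf x - Tf x) - cf * (Pg x - Tg x)).
  assert (HG : smooth G) by (unfold G; auto).
  assert (HDG : forall x, Derive G x =
            cg * (Derive Pf x - Derive Tf x) - cf * (Derive Pg x - Derive Tg x)).
  { intros x. unfold G.
    rewrite Derive_minus, !Derive_scal, !Derive_minus by auto using smooth_ex_derive.
    reflexivity. }
  rewrite <- (RInt_minus (V := R_CompleteNormedModule))
    by (apply ex_RInt_continuous_R; intros; solve_continuous).
  rewrite (RInt_ext _ (fun x => Derive G x + cross_remainder Pf Pg Tf Tg cf cg x)).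
  - rewrite (RInt_plus (V := R_CompleteNormedModule) (Derive G))
      by (apply ex_RInt_continuous_R; intros; unfold cross_remainder; solve_continuous).
    rewrite RInt_Derive by (intros; first [apply smooth_ex_derive, HG | solve_continuous]).
    reflexivity.
  - intros x _. unfold cross_remainder.
    rewrite HDG, !Derive_minus by auto using smooth_ex_derive.
    match goal with |- ?l = ?r => change (@eq R l r) end.
    unfold minus, plus, opp; simpl. ring.
Qed.

Lemma Rabs_mult_le u v U V : Rabs u <= U -> Rabs v <= V -> Rabs (u * v) <= U * V.
Proof. intros. rewrite Rabs_mult. apply Rmult_le_compat; auto using Rabs_pos. Qed.

Lemma Rabs_sub_sum3_le u1 u2 u3 v1 v2 v3 :
  Rabs (u1 + u2 + u3 - (v1 + v2 + v3)) <=
  Rabs u1 + Rabs u2 + Rabs u3 + (Rabs v1 + Rabs v2 + Rabs v3).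
Proof.
  assert (Hsum3 : forall w1 w2 w3, Rabs (w1 + w2 + w3) <= Rabs w1 + Rabs w2 + Rabs w3).
  { intros. eapply Rle_trans; [apply Rabs_triang|].
    apply Rplus_le_compat_r, Rabs_triang. }
  eapply Rle_trans; [apply Rabs_triang|]. rewrite Rabs_Ropp.
  apply Rplus_le_compat; apply Hsum3.
Qed.

Lemma Rabs_cross_remainder_le (Pf Pg Tf Tg : R -> R) cf cg x d0 d1 I :
  Rabs (Pf x - Tf x) <= d0 -> Rabs (Pg x - Tg x) <= d0 ->
  Rabs (Derive (fun y => Pf y - Tf y) x) <= d1 ->
  Rabs (Derive (fun y => Pg y - Tg y) x) <= d1 ->
  Rabs (Tf x - cf) <= I -> Rabs (Tg x - cg) <= I ->
  Rabs (cross_remainder Pf Pg Tf Tg cf cg x)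
  <= 2 * d1 * (I + d0) + d0 * (Rabs (Derive Tf x) + Rabs (Derive Tg x)).
Proof.
  intros H0f H0g H1f H1g HIf HIg. unfold cross_remainder.
  eapply Rle_trans; [apply Rabs_sub_sum3_le|].
  assert (H1 := Rabs_mult_le _ _ _ _ H1f HIg).
  assert (H2 := Rabs_mult_le _ _ _ _ H1f H0g).
  assert (H3 := Rabs_mult_le _ _ _ _ (Rle_refl (Rabs (Derive Tf x))) H0g).
  assert (H4 := Rabs_mult_le _ _ _ _ H1g HIf).
  assert (H5 := Rabs_mult_le _ _ _ _ H1g H0f).
  assert (H6 := Rabs_mult_le _ _ _ _ (Rle_refl (Rabs (Derive Tg x))) H0f).
  lra.
Qed.

Lemma Rabs_div_pos x y : 0 < y -> Rabs (x / y) = Rabs x / y.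
Proof. intros Hy. unfold Rdiv. rewrite Rabs_mult, (Rabs_pos_eq (/ y)); auto with real. Qed.

Lemma Rle_div_of_mul_le c u v : 0 < c -> c * u <= v -> u <= v / c.
Proof.
  intros Hc H. apply (Rmult_le_reg_l c); [auto|].
  replace (c * (v / c)) with v by (field; lra). exact H.
Qed.

Lemma fold_Rmax_ge (l : list R) (F : R -> R) y :
  In y l -> F y <= fold_right Rmax 0 (map F l).
Proof.
  induction l as [|x l IH]; intros H; [destruct H|]. simpl.
  destruct H as [->|H]; [apply Rmax_l | eapply Rle_trans; [apply IH, H | apply Rmax_r]].
Qed.

Lemma fold_Rmax_le (l : list R) (F : R -> R) c : 0 <= c ->
  (forall y, In y l -> F y <= c) -> fold_right Rmax 0 (map F l) <= c.
Proof.
  induction l as [|x l IH]; intros Hc H; simpl; [auto|].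
  apply Rmax_lub; [apply H; left; auto | apply IH; auto].
  intros; apply H; right; auto.
Qed.

Lemma Rabs_sub_le_diam xs x y : In x xs -> In y xs -> Rabs (x - y) <= diam xs.
Proof.
  intros Hx Hy. unfold diam.
  eapply Rle_trans;
    [|apply (fold_Rmax_ge _ (fun x => fold_right Rmax 0 (map (fun y => Rabs (x - y)) xs)) x Hx)].
  apply (fold_Rmax_ge _ (fun y => Rabs (x - y))). auto.
Qed.

Lemma diam_le_of_bounds xs lo hi : lo <= hi ->
  (forall x, In x xs -> lo <= x <= hi) -> diam xs <= hi - lo.
Proof.
  intros Hlh H. unfold diam. apply fold_Rmax_le; [lra|]. intros x Hx.
  apply fold_Rmax_le; [lra|]. intros y Hy.
  apply H in Hx. apply H in Hy. apply Rabs_le. lra.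
Qed.

Section Comparison.

Variables (m : nat) (f g h : R -> R) (xs : list R) (a b eta : R).
Hypothesis Hm : (1 <= m)%nat.
Hypotheses (Hf : derivable_upto m f) (Hg : derivable_upto m g).
Hypothesis Hab : a < b.
Hypotheses (Hnodup : NoDup xs) (Hlen : length xs = S m) (Ha : In a xs) (Hb : In b xs).
Hypothesis Hnodes : forall x, In x xs -> a - (b - a) <= x <= a + (b - a).
Hypotheses (Hdevf : deviation_le (Derive_n f m) a (2 * (b - a)) eta)
           (Hdevg : deviation_le (Derive_n g m) a (2 * (b - a)) eta).

Let Tf := Taylor m f a.
Let Tg := Taylor m g a.
Let Pf := lagrange xs f.
Let Pg := lagrange xs g.
Let I := RInt (fun x => Rabs (Derive Tf x) + Rabs (Derive Tg x)) a b.
Let Q := (2 * (b - a)) ^ m.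
Let e := (INR m + 1) * eta * Q.

Lemma Acont_sub_Adisc : Acont m f g h a b - Adisc f g h xs a b =
  2 * RInt (cross_remainder Pf Pg Tf Tg (f a) (g a)) a b.
Proof.
  assert (H := RInt_cross_sub Pf Pg Tf Tg (f a) (g a) a b
                 (smooth_lagrange _ _) (smooth_lagrange _ _) (smooth_Taylor _ _ _)
                 (smooth_Taylor _ _ _)).
  unfold Acont, Adisc, Pf, Pg, Tf, Tg in *.
  rewrite !lagrange_interp, !Taylor_at in H by auto. lra.
Qed.

Lemma interp_error_le x : a <= x <= b ->
  (Rabs (Pf x - Tf x) <= e /\ (b - a) * Rabs (Derive (fun y => Pf y - Tf y) x) <= e) /\
  (Rabs (Pg x - Tg x) <= e /\ (b - a) * Rabs (Derive (fun y => Pg y - Tg y) x) <= e).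
Proof. intros Hx. split; apply (interp_Taylor_bounds m _ xs a (b - a) eta); auto; lra. Qed.

Lemma Acont_sub_Adisc_le :
  Rabs (Acont m f g h a b - Adisc f g h xs a b) <= 2 * (3 * e * I + 2 * e ^ 2).
Proof.
  rewrite Acont_sub_Adisc, Rabs_mult, (Rabs_pos_eq 2) by lra.
  apply Rmult_le_compat_l; [lra|].
  set (d1 := e / (b - a)).
  set (bnd := fun x => 2 * d1 * (I + e) + e * (Rabs (Derive Tf x) + Rabs (Derive Tg x))).
  assert (Hbnd : forall x, a <= x <= b ->
            Rabs (cross_remainder Pf Pg Tf Tg (f a) (g a) x) <= bnd x).
  { intros x Hx. destruct (interp_error_le x Hx) as [[H0f H1f] [H0g H1g]].
    destruct (Rabs_sub_le_RInt_abs_Derive_plus Tf Tg a b x (smooth_Taylor _ _ _)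
                (smooth_Taylor _ _ _) Hx) as [HIf HIg].
    unfold Tf, Tg in HIf, HIg. rewrite !Taylor_at in HIf, HIg.
    apply Rabs_cross_remainder_le; auto; apply Rle_div_of_mul_le; auto; lra. }
  assert (Hex : ex_RInt (cross_remainder Pf Pg Tf Tg (f a) (g a)) a b)
    by (apply ex_RInt_continuous_R; intros; unfold cross_remainder, Pf, Pg, Tf, Tg;
        solve_continuous).
  eapply Rle_trans; [apply abs_RInt_le; auto; lra|].
  eapply Rle_trans; [apply RInt_le with (g := bnd); [lra | | | intros; apply Hbnd; lra]|].
  - apply ex_RInt_continuous_R. intros. unfold cross_remainder, Pf, Pg, Tf, Tg.
    solve_continuous.
  - apply ex_RInt_continuous_R. intros. unfold bnd, Tf, Tg. solve_continuous.
  - unfold bnd. rewrite RInt_const_plus_scal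
      by (apply ex_RInt_abs_Derive_plus; apply smooth_Taylor).
    fold I. unfold d1. right. field. lra.
Qed.

Lemma Vdisc_bounds : 0 < Vdisc m f g xs a b <= Q * Q + Q * (I + 2 * e).
Proof.
  set (d := diam xs).
  assert (Hd1 : b - a <= d).
  { assert (H := Rabs_sub_le_diam xs b a Hb Ha). rewrite Rabs_pos_eq in H; unfold d; lra. }
  assert (Hd2 : d <= 2 * (b - a)).
  { assert (H := diam_le_of_bounds xs (a - (b - a)) (a + (b - a)) ltac:(lra) Hnodes).
    unfold d. lra. }
  assert (Hdm : 0 < d ^ m <= Q) by (split; [apply pow_lt | apply pow_incr]; lra).
  set (J := RInt (fun x => Rabs (Derive Pf x) + Rabs (Derive Pg x)) a b).
  assert (HexJ : ex_RInt (fun x => Rabs (Derive Pf x) + Rabs (Derive Pg x)) a b)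
    by (apply ex_RInt_abs_Derive_plus; apply smooth_lagrange).
  assert (HJ0 : 0 <= J)
    by (apply RInt_abs_Derive_plus_ge_0; [lra | apply smooth_lagrange | apply smooth_lagrange]).
  assert (HJ : J <= I + 2 * e).
  { set (d1 := e / (b - a)).
    eapply Rle_trans;
      [apply RInt_le with
         (g := fun x => 2 * d1 + 1 * (Rabs (Derive Tf x) + Rabs (Derive Tg x)));
       [lra | auto | apply ex_RInt_continuous_R; intros; unfold Tf, Tg; solve_continuous |]|].
    - intros x Hx. destruct (interp_error_le x ltac:(lra)) as [[_ H1f] [_ H1g]].
      apply Rle_div_of_mul_le in H1f; [|lra]. apply Rle_div_of_mul_le in H1g; [|lra].
      rewrite Derive_minus in H1f, H1g
        by (apply smooth_ex_derive; unfold Pf, Pg, Tf, Tg; auto).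
      assert (Rabs (Derive Pf x) <= Rabs (Derive Tf x) + Rabs (Derive Pf x - Derive Tf x))
        by (eapply Rle_trans; [|apply Rabs_triang]; right; f_equal; ring).
      assert (Rabs (Derive Pg x) <= Rabs (Derive Tg x) + Rabs (Derive Pg x - Derive Tg x))
        by (eapply Rle_trans; [|apply Rabs_triang]; right; f_equal; ring).
      unfold d1. lra.
    - rewrite RInt_const_plus_scal
        by (apply ex_RInt_abs_Derive_plus; apply smooth_Taylor).
      fold I. unfold d1. right. field. lra. }
  unfold Vdisc. change (lagrange xs f) with Pf. change (lagrange xs g) with Pg. fold d J.
  replace (2 * m)%nat with (m + m)%nat by lia. rewrite pow_add.
  assert (0 < d ^ m * d ^ m) by (apply Rmult_lt_0_compat; lra).
  assert (0 <= d ^ m * J) by (apply Rmult_le_pos; lra).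
  assert (d ^ m * d ^ m <= Q * Q) by (apply Rmult_le_compat; lra).
  assert (d ^ m * J <= Q * (I + 2 * e)) by (apply Rmult_le_compat; lra).
  lra.
Qed.

Lemma Vcont_bounds : 0 < Vcont m f g a b /\ Q * Q + Q * I <= 4 ^ m * Vcont m f g a b.
Proof.
  assert (HI : 0 <= I)
    by (apply RInt_abs_Derive_plus_ge_0; [lra | apply smooth_Taylor | apply smooth_Taylor]).
  assert (Hsm : 0 < (b - a) ^ m) by (apply pow_lt; lra).
  assert (Hs2m : 0 < (b - a) ^ (2 * m)) by (apply pow_lt; lra).
  split.
  - unfold Vcont. fold Tf Tg. fold I.
    assert (0 <= (b - a) ^ m * I) by (apply Rmult_le_pos; lra). lra.
  - apply pow_double_bound; [lra | exact HI].
Qed.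

(* Both denominators are comparable to [Q^2 + Q I], and the numerators differ by
   [O(eta (Q^2 + Q I))]. *)
Lemma Acont_Vcont_bound : eta <= 1 ->
  Rabs (Acont m f g h a b / Vcont m f g a b) <=
  4 ^ m * (3 * (INR m + 1) * Rabs (Adisc f g h xs a b / Vdisc m f g xs a b)
           + 4 * (INR m + 1) ^ 2 * eta).
Proof.
  intros Heta1.
  set (M := INR m + 1). set (W := Q * Q + Q * I).
  set (r := Rabs (Adisc f g h xs a b / Vdisc m f g xs a b)).
  assert (HM : 2 <= M) by (unfold M; apply le_INR in Hm; simpl in Hm; lra).
  assert (Heta : 0 <= eta)
    by (apply (deviation_le_nonneg (Derive_n f m) a (2 * (b - a))); [lra | exact Hdevf]).
  assert (HQ : 0 < Q) by (apply pow_lt; lra).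
  assert (HI : 0 <= I)
    by (apply RInt_abs_Derive_plus_ge_0; [lra | apply smooth_Taylor | apply smooth_Taylor]).
  assert (Hr : 0 <= r) by apply Rabs_pos.
  destruct Vdisc_bounds as [HVd0 HVd]. destruct Vcont_bounds as [HVc0 HVc].
  assert (HAd : Rabs (Adisc f g h xs a b) = r * Vdisc m f g xs a b)
    by (unfold r; rewrite Rabs_div_pos by auto; field; lra).
  assert (HAA := Acont_sub_Adisc_le).
  assert (Hdisc : r * Vdisc m f g xs a b <= 3 * M * r * W).
  { assert (Vdisc m f g xs a b <= 3 * M * W).
    { eapply Rle_trans; [apply HVd|]. unfold e, W. fold M.
      assert (0 <= Q * I) by nra. assert (eta * (Q * Q) <= Q * Q) by nra. nra. }
    nra. }
  assert (Hdiff : 2 * (3 * e * I + 2 * e ^ 2) <= 4 * M ^ 2 * eta * W).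
  { unfold e, W. fold M.
    assert (0 <= (4 * M * M - 6 * M) * (eta * Q * I))
      by (apply Rmult_le_pos; [nra | apply Rmult_le_pos; [apply Rmult_le_pos|]; lra]).
    assert (0 <= M * M * (Q * Q) * (eta - eta * eta))
      by (apply Rmult_le_pos; [apply Rmult_le_pos; apply Rmult_le_pos|]; nra).
    simpl pow. lra. }
  rewrite Rabs_div_pos by auto.
  assert (Htri : Rabs (Acont m f g h a b) <=
                 Rabs (Adisc f g h xs a b) + Rabs (Acont m f g h a b - Adisc f g h xs a b)).
  { eapply Rle_trans; [|apply Rabs_triang]. right. f_equal. ring. }
  assert (Hcoef : 0 <= 3 * M * r + 4 * M ^ 2 * eta) by nra.
  apply (Rmult_le_reg_r (Vcont m f g a b)); [auto|].
  replace (Rabs (Acont m f g h a b) / Vcont m f g a b * Vcont m f g a b)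
    with (Rabs (Acont m f g h a b)) by (field; lra).
  apply Rle_trans with ((3 * M * r + 4 * M ^ 2 * eta) * W); [nra|].
  replace (4 ^ m * (3 * M * r + 4 * M ^ 2 * eta) * Vcont m f g a b)
    with ((3 * M * r + 4 * M ^ 2 * eta) * (4 ^ m * Vcont m f g a b)) by ring.
  apply Rmult_le_compat_l; auto.
Qed.

End Comparison.

(** * Small scales *)

Lemma deviation_le_uniform (F : R -> R) lo hi eta :
  (forall x, continuous F x) -> 0 < eta ->
  exists del, 0 < del /\ forall a r, lo <= a <= hi -> r <= del -> deviation_le F a r eta.
Proof.
  intros HF Heta.
  destruct (Rtopology.Heine F (fun c => lo - 1 <= c <= hi + 1) (Rtopology.compact_P3 _ _)
              (fun x _ => proj2 (continuity_pt_filterlim F x) (HF x)) (mkposreal eta Heta))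
    as [[del Hdel] Hunif]. simpl in *.
  exists (Rmin 1 (del / 2)). split; [apply Rmin_pos; lra|].
  intros a r Ha Hr y Hy.
  assert (Hr1 := Rle_trans _ _ _ Hr (Rmin_l _ _)).
  assert (Hr2 := Rle_trans _ _ _ Hr (Rmin_r _ _)).
  left. apply Hunif; [lra | lra | apply Rabs_lt_between'; lra].
Qed.

Definition accumulation_point (K : R -> Prop) (a : R) : Prop :=
  forall e, 0 < e -> exists y, K y /\ y <> a /\ Rabs (y - a) < e.

Lemma accumulation_point_nearby_points K a : accumulation_point K a ->
  forall n r, 0 < r -> exists L, length L = n /\ NoDup L /\
    forall y, In y L -> K y /\ 0 < Rabs (y - a) < r.
Proof.
  intros Hacc n. induction n as [|n IH]; intros r Hr.
  - exists nil. split; [reflexivity | split; [constructor | intros ? []]].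
  - destruct (Hacc r Hr) as [y [Ky [Hya Hyr]]].
    assert (Hpos : 0 < Rabs (y - a)) by (apply Rabs_pos_lt; lra).
    destruct (IH (Rabs (y - a)) Hpos) as [L [HL1 [HL2 HL3]]].
    exists (y :: L). split; [simpl; auto | split].
    + constructor; auto. intros Hin. apply HL3 in Hin. lra.
    + intros z [<-|Hz]; [auto|]. apply HL3 in Hz. repeat split; try tauto; lra.
Qed.

Lemma isolated_points_radius K (l : list R) : exists d0, 0 < d0 /\
  forall x, In x l -> isolated_point K x -> forall y, K y -> Rabs (y - x) < d0 -> y = x.
Proof.
  induction l as [|x l [d [Hd H]]].
  - exists 1. split; [lra | intros x []].
  - destruct (classic (isolated_point K x)) as [[Kx [e [He He2]]]|Hx].
    + exists (Rmin d e). split; [apply Rmin_pos; auto|].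
      intros x' [<-|Hx'] Hiso y Ky Hy.
      * apply He2; auto. eapply Rlt_le_trans; [eauto | apply Rmin_r].
      * apply H; auto. eapply Rlt_le_trans; [eauto | apply Rmin_l].
    + exists d. split; auto. intros x' [<-|Hx'] Hiso; [contradiction | auto].
Qed.

Lemma finitely_many_isolated_accumulation K : finitely_many_isolated K ->
  exists d0, 0 < d0 /\ forall a b, K a -> K b -> 0 < b - a < d0 -> accumulation_point K a.
Proof.
  intros [l Hl]. destruct (isolated_points_radius K l) as [d0 [Hd0 H]].
  exists d0. split; auto. intros a b Ka Kb Hab. apply NNPP. intros Hacc.
  assert (Hiso : isolated_point K a).
  { apply not_all_ex_not in Hacc as [e He]. split; auto. exists e.
    apply imply_to_and in He as [He Hnot]. split; auto.
    intros y Ky Hy. apply NNPP. intros Hya. apply Hnot. exists y. auto. }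
  assert (b = a) by (apply (H a (Hl a Hiso) Hiso b Kb); rewrite Rabs_pos_eq; lra).
  lra.
Qed.

Lemma exists_nodes m K : (1 <= m)%nat -> (finitely_many_isolated K \/ m = 1%nat) ->
  exists d0, 0 < d0 /\ forall a b, K a -> K b -> 0 < b - a < d0 ->
  exists xs, NoDup xs /\ length xs = S m /\ In a xs /\ In b xs /\
    (forall x, In x xs -> K x) /\ (forall x, In x xs -> a - (b - a) <= x <= a + (b - a)).
Proof.
  intros Hm [Hfin | ->].
  - destruct (finitely_many_isolated_accumulation K Hfin) as [d0 [Hd0 Hacc]].
    exists d0. split; auto. intros a b Ka Kb Hab.
    destruct (accumulation_point_nearby_points K a (Hacc a b Ka Kb Hab) (m - 1) (b - a))
      as [L [HL1 [HL2 HL3]]]; [lra|].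
    exists (a :: b :: L). split; [|split; [|split; [|split; [|split]]]].
    + constructor; [|constructor; auto].
      * intros [H|H]; [lra|]. apply HL3 in H. rewrite Rminus_diag, Rabs_R0 in H. lra.
      * intros H. apply HL3 in H. rewrite Rabs_pos_eq in H; lra.
    + simpl. lia.
    + left; auto.
    + right; left; auto.
    + intros x [<-|[<-|H]]; auto. apply HL3, H.
    + intros x [<-|[<-|H]]; try lra.
      apply HL3 in H as [_ [_ H]]. apply Rabs_lt_between' in H. lra.
  - exists 1. split; [lra|]. intros a b Ka Kb Hab.
    exists [a; b]. split; [|split; [|split; [|split; [|split]]]].
    + constructor; [intros [H|[]]; lra | constructor; [intros [] | constructor]].
    + reflexivity.
    + left; auto.
    + right; left; auto.
    + intros x [<-|[<-|[]]]; auto.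
    + intros x [<-|[<-|[]]]; lra.
Qed.

Lemma Acont_Vcont_bound_small_scale m f g h K lo hi :
  (1 <= m)%nat -> derivable_upto m f -> derivable_upto m g ->
  (forall x, continuous (Derive_n f m) x) -> (forall x, continuous (Derive_n g m) x) ->
  (forall x, K x -> lo <= x <= hi) -> (finitely_many_isolated K \/ m = 1%nat) ->
  forall eta, 0 < eta <= 1 -> exists del, 0 < del /\ forall a b, K a -> K b -> 0 < b - a < del ->
  exists xs, NoDup xs /\ length xs = S m /\ (forall x, In x xs -> K x) /\
    diam xs <= 2 * (b - a) /\ In a xs /\ In b xs /\
    Rabs (Acont m f g h a b / Vcont m f g a b) <=
    4 ^ m * (3 * (INR m + 1) * Rabs (Adisc f g h xs a b / Vdisc m f g xs a b)
             + 4 * (INR m + 1) ^ 2 * eta).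
Proof.
  intros Hm Hf Hg Hfc Hgc Hbnd Hiso eta Heta.
  destruct (deviation_le_uniform _ lo hi eta Hfc (proj1 Heta)) as [df [Hdf Hdevf]].
  destruct (deviation_le_uniform _ lo hi eta Hgc (proj1 Heta)) as [dg [Hdg Hdevg]].
  destruct (exists_nodes m K Hm Hiso) as [d0 [Hd0 Hnodes]].
  exists (Rmin d0 (Rmin (df / 2) (dg / 2))). split; [repeat apply Rmin_pos; lra|].
  intros a b Ka Kb [Hab Hsmall].
  apply Rmin_Rgt_l in Hsmall as [Hsd0 [Hsdf Hsdg]%Rmin_Rgt_l].
  destruct (Hnodes a b Ka Kb ltac:(lra)) as [xs [Hnd [Hlen [Ha [Hb [HxK Hxs]]]]]].
  assert (Hdiam := diam_le_of_bounds xs (a - (b - a)) (a + (b - a)) ltac:(lra) Hxs).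
  exists xs. refine (conj Hnd (conj Hlen (conj HxK (conj _ (conj Ha (conj Hb _)))))); [lra|].
  apply Acont_Vcont_bound; auto; try lra; [apply Hdevf | apply Hdevg]; auto; lra.
Qed.

Theorem lemma4p5 (m : nat) (f g h : R -> R) (K : R -> Prop) :
  (1 <= m)%nat ->
  Cm m f -> Cm m g -> Cm m h ->
  Rtopology.compact K ->
  at_least_points (S m) K ->
  (finitely_many_isolated K \/ m = 1%nat) ->
  discrete_AV_condition m f g h K ->
  AV_condition m f g h K.
Proof.
  intros Hm [Hf [Hfc _]] [Hg [Hgc _]] _ HK _ Hiso Hdisc eps Heps.
  destruct (Rtopology.compact_P1 K HK) as [lo [hi Hbnd]].
  set (c1 := 4 ^ m * (3 * (INR m + 1))). set (c2 := 4 ^ m * (4 * (INR m + 1) ^ 2)).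
  assert (Hc : 0 < c1 /\ 0 < c2)
    by (unfold c1, c2; generalize (pos_INR m) (pow_lt 4 m ltac:(lra)); split; nra).
  set (eta := Rmin 1 (eps / (2 * c2))).
  assert (Heta : 0 < eta <= 1)
    by (split; [apply Rmin_pos; [lra | apply Rdiv_lt_0_compat; lra] | apply Rmin_l]).
  destruct (Acont_Vcont_bound_small_scale m f g h K lo hi Hm Hf Hg
              (fun x => Hfc m x (le_n m)) (fun x => Hgc m x (le_n m)) Hbnd Hiso eta Heta)
    as [del [Hdel Hbound]].
  destruct (Hdisc (eps / (2 * c1))) as [dd [Hdd Hdisc']]; [apply Rdiv_lt_0_compat; lra|].
  exists (Rmin del (dd / 2)). split; [apply Rmin_pos; lra|].
  intros a b Ka Kb [Hab [Hsdel Hsdd]%Rmin_Rgt_l].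
  destruct (Hbound a b Ka Kb ltac:(lra)) as [xs [Hnd [Hlen [HxK [Hdiam [Ha [Hb Hle]]]]]]].
  assert (Hr := Hdisc' xs Hnd Hlen HxK ltac:(lra) a b Ha Hb ltac:(lra)).
  apply (Rmult_lt_compat_l c1) in Hr; [|lra].
  assert (Heta2 : c2 * eta <= c2 * (eps / (2 * c2))) by (apply Rmult_le_compat_l, Rmin_r; lra).
  replace (c1 * (eps / (2 * c1))) with (eps / 2) in Hr by (field; lra).
  replace (c2 * (eps / (2 * c2))) with (eps / 2) in Heta2 by (field; lra).
  eapply Rle_lt_trans; [exact Hle|]. unfold c1, c2 in *. lra.
Qed.
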